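(* If $\mathcal{Q}\subseteq 2^E$ ($E$ finite) is weakly Rayleigh, then all maximal elements of $\mathcal{Q}$ (under inclusion) have the same cardinality $r$, and all minimal elements of $\mathcal{Q}$ have the same cardinality $s$.
   Context: For $\omega:2^E\to[0,\infty)$ not identically zero, $Z(\omega;\mathbf{y})=\sum_S\omega(S)\prod_{e\in S}y_e$; with subscripts denoting partial derivatives, $Z$ is Rayleigh if $Z_eZ_f-Z_{ef}Z\ge0$ for all distinct $e,f$ and all positive $\mathbf{y}$. $\mathcal{Q}$ is weakly Rayleigh if some $\omega\ge0$ with $\{S:\omega(S)>0\}=\mathcal{Q}$ has $Z(\omega;\mathbf{y})$ Rayleigh. *)

From mathcomp Require Import all_boot all_order all_algebra.
From mathcomp Require Import reals.
Set Implicit Arguments. Unset Strict Implicit. Unset Printing Implicit Defensive.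
Import Order.TTheory GRing.Theory Num.Theory.
Local Open Scope ring_scope.

Section Rayleigh.
Variables (R : realType) (E : finType).

(* Partial derivative of the multiaffine generating polynomial
   Z(w;y) = \sum_S w(S) \prod_{e in S} y_e  with respect to all variables
   in A (A = set0 gives Z itself): since Z is multiaffine,
   d^A Z (y) = \sum_{S \supseteq A} w(S) \prod_{e in S \ A} y_e. *)
Definition Zder (w : {set E} -> R) (A : {set E}) (y : E -> R) : R :=
  \sum_(S : {set E} | A \subset S) w S * \prod_(e in S :\: A) y e.

Definition Z (w : {set E} -> R) (y : E -> R) : R := Zder w set0 y.

Definition Rayleigh (w : {set E} -> R) : Prop :=
  forall (e f : E), e != f -> forall y : E -> R, (forall g, 0 < y g) ->
    0 <= Zder w [set e] y * Zder w [set f] y - Zder w [set e; f] y * Z w y.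

Definition weakly_Rayleigh (Q : {set {set E}}) : Prop :=
  exists w : {set E} -> R,
    (forall S, 0 <= w S) /\ (forall S, (0 < w S) <-> (S \in Q)) /\
    (exists S, w S != 0) /\ Rayleigh w.

Definition maximal_in (Q : {set {set E}}) (S : {set E}) : Prop :=
  S \in Q /\ forall T, T \in Q -> S \subset T -> T = S.
Definition minimal_in (Q : {set {set E}}) (S : {set E}) : Prop :=
  S \in Q /\ forall T, T \in Q -> T \subset S -> T = S.
End Rayleigh.

From mathcomp Require Import all_boot all_order all_algebra.
From mathcomp Require Import reals.
From mathcomp Require Import ring lra zify.
From Stdlib Require Import Classical_Prop.
Set Implicit Arguments. Unset Strict Implicit. Unset Printing Implicit Defensive.
Import Order.TTheory GRing.Theory Num.Theory.
Local Open Scope ring_scope.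

(* Substitute y_e = t ^ c_e for an integer weight c and let t grow: the
   dominant terms of Z come from the members of Q of largest c-weight.  If
   exactly two members X, Y are c-heaviest and two distinct e, f lie in X \ Y,
   then y_e y_f (Z_e Z_f - Z_ef Z) behaves like -w(X) w(Y) t^(2 c(X)), against
   the Rayleigh inequality.  So the edges of the Newton polytope of Q only join
   sets differing by at most one element each way.  If S is maximal in Q and
   T in Q is larger than S and as close to S as possible, an explicit weight
   makes {S, T} such an edge, whence T is S plus one element, absurd.  Minimal
   members of Q are the complements of maximal members of the complemented
   family, which satisfies the same edge condition. *)

Section SetWeights.
Variable E : finType.
Implicit Types (c : E -> int) (A B S T X Y : {set E}) (Q : {set {set E}}).

Definition cweight c A : int := \sum_(g in A) c g.

(* X and Y are the only c-heaviest members of Q, i.e. conv {X, Y} is an edge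
   (or a vertex) of the Newton polytope of Q. *)
Definition weight_edge Q c X Y : Prop :=
  [/\ X \in Q, Y \in Q, cweight c X = cweight c Y &
      forall A, A \in Q -> A != X -> A != Y -> cweight c A < cweight c X].

Definition short_edges Q : Prop :=
  forall c X Y, weight_edge Q c X Y -> (#|X :\: Y| <= 1)%N.

Lemma cweightB c A S :
  cweight c A - cweight c S = cweight c (A :\: S) - cweight c (S :\: A).
Proof.
rewrite /cweight (big_setID S) [X in _ - X](big_setID A) /= setIC.
by rewrite opprD addrACA subrr add0r.
Qed.

Lemma cweight_if T (x y : int) B :
  cweight (fun g => if g \in T then x else y) B = x * #|B :&: T|%:Z + y * #|B :\: T|%:Z.
Proof.
rewrite /cweight (big_setID T) /=.
have -> : \sum_(g in B :&: T) (if g \in T then x else y) = \sum_(g in B :&: T) x.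
  by apply: eq_bigr => g /setIP[_ ->].
have -> : \sum_(g in B :\: T) (if g \in T then x else y) = \sum_(g in B :\: T) y.
  by apply: eq_bigr => g /setDP[_ /negbTE ->].
by rewrite !sumr_const !pmulrn !mulrzz.
Qed.

Lemma cweight_setC c A : cweight c (~: A) = cweight c setT - cweight c A.
Proof. by rewrite /cweight [in RHS](big_setID A) /= setTI setTD addrAC subrr add0r. Qed.

Lemma eq_set_of_cardsD S A : #|S :\: A| = 0%N -> #|A :\: S| = 0%N -> A = S.
Proof.
move=> /eqP + /eqP; rewrite !cards_eq0 !setD_eq0 => SA AS.
by apply/eqP; rewrite eqEsubset AS SA.
Qed.

Lemma eq_set_of_region_cards S T A :
  #|(S :\: A) :&: T| = 0%N -> #|(A :\: S) :\: T| = 0%N ->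
  #|(S :\: A) :\: T| = #|S :\: T| -> #|(A :\: S) :&: T| = #|T :\: S| -> A = T.
Proof.
move=> /eqP + /eqP; rewrite !cards_eq0 => /eqP/setP e1 /eqP/setP e2 c3 c4.
have /setP e3 : (S :\: A) :\: T = S :\: T.
  apply/eqP; rewrite eqEcard c3 leqnn andbT.
  by apply/subsetP => g; rewrite !inE => /and3P[-> _ ->].
have /setP e4 : (A :\: S) :&: T = T :\: S.
  apply/eqP; rewrite eqEcard c4 leqnn andbT.
  by apply/subsetP => g; rewrite !inE => /andP[/andP[-> _] ->].
apply/setP => g; move: (e1 g) (e2 g) (e3 g) (e4 g); rewrite !inE.
by case: (g \in S); case: (g \in T); case: (g \in A).
Qed.

Section ClosestLarger.
Variables (Q : {set {set E}}) (S T : {set E}).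
Hypotheses (SQ : S \in Q) (TQ : T \in Q) (ST : (#|S| < #|T|)%N)
  (T_closest : forall A, A \in Q -> (#|S| < #|A|)%N ->
     (#|S :\: T| + #|T :\: S| <= #|S :\: A| + #|A :\: S|)%N).

Let p := #|S :\: T|.
Let q := #|T :\: S|.
Let K : int := (p * q)%:Z + 1.

(* S and T tie at K |S :&: T| + p q, and any set that misses part of S :&: T
   or leaves S :|: T pays K > p q; closeness of T settles the remaining sets. *)
Definition exchange_weight (g : E) : int :=
  if g \in S then (if g \in T then K else q%:Z) else (if g \in T then p%:Z else - K).

Lemma exchange_weightB A :
  cweight exchange_weight A - cweight exchange_weight S =
  p%:Z * #|(A :\: S) :&: T|%:Z - K * #|(A :\: S) :\: T|%:Z
  - (K * #|(S :\: A) :&: T|%:Z + q%:Z * #|(S :\: A) :\: T|%:Z).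
Proof.
rewrite cweightB.
have -> : cweight exchange_weight (A :\: S) =
    cweight (fun g => if g \in T then p%:Z else - K) (A :\: S).
  by apply: eq_bigr => g /setDP[_ /negbTE gS]; rewrite /exchange_weight gS.
have -> : cweight exchange_weight (S :\: A) =
    cweight (fun g => if g \in T then K else q%:Z) (S :\: A).
  by apply: eq_bigr => g /setDP[gS _]; rewrite /exchange_weight gS.
by rewrite !cweight_if mulNr.
Qed.

Lemma weight_edge_exchange : weight_edge Q exchange_weight T S.
Proof.
have cTS : cweight exchange_weight T = cweight exchange_weight S.
  apply/eqP; rewrite -subr_eq0 exchange_weightB.
  have -> : (T :\: S) :&: T = T :\: S by apply/setIidPl/subsetDl.
  have -> : (T :\: S) :\: T = set0 by apply/eqP; rewrite setD_eq0 subsetDl.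
  have -> : (S :\: T) :&: T = set0 by rewrite setDE -setIA [~: T :&: T]setIC setICr setI0.
  have -> : (S :\: T) :\: T = S :\: T by rewrite setDDl setUid.
  by rewrite cards0 -/p -/q; apply/eqP; ring.
split=> // A AQ AT AS; rewrite cTS -subr_lt0 exchange_weightB.
set j := #|(A :\: S) :&: T|; set o := #|(A :\: S) :\: T|.
set x1 := #|(S :\: A) :&: T|; set x2 := #|(S :\: A) :\: T|.
have j_le : (j <= q)%N.
  by apply: subset_leq_card; apply/subsetP => g; rewrite !inE => /andP[/andP[-> _] ->].
have x2_le : (x2 <= p)%N.
  by apply: subset_leq_card; apply/subsetP => g; rewrite !inE => /and3P[-> _ ->].
have cSA : (x1 + x2)%N = #|S :\: A| := cardsID T (S :\: A).
have cAS : (j + o)%N = #|A :\: S| := cardsID T (A :\: S).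
have cA : (#|S :&: A| + #|A :\: S|)%N = #|A| by rewrite setIC cardsID.
have cS : (#|S :&: A| + #|S :\: A|)%N = #|S| := cardsID A S.
have p_lt_q : (p < q)%N.
  by move: ST; rewrite /p /q -(cardsID T S) -(cardsID S T) setIC; lia.
rewrite /K.
have [defect | no_defect] : (0 < o + x1)%N \/ (o + x1 = 0)%N by lia.
  have pj : (p * j <= p * q)%N by rewrite leq_mul2l j_le orbT.
  nia.
have [o0 x10] : o = 0%N /\ x1 = 0%N by lia.
have [SA | AS_le] := ltnP #|S| #|A|.
  have := T_closest AQ SA; rewrite -cSA -cAS -/p -/q => closest.
  have x2p : x2 = p by lia.
  have jq : j = q by lia.
  by case/eqP: AT; apply: (eq_set_of_region_cards (S := S)).
have j_le_x2 : (j <= x2)%N by lia.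
have [x20 | x2_gt0] := posnP x2.
  by case/eqP: AS; apply: eq_set_of_cardsD; lia.
have : (p * j <= p * x2)%N by rewrite leq_mul2l j_le_x2 orbT.
have : (q * x2 > p * x2)%N by rewrite ltn_pmul2r.
nia.
Qed.

End ClosestLarger.

Lemma short_edges_maximal_card Q S T0 :
  short_edges Q -> maximal_in Q S -> T0 \in Q -> (#|T0| <= #|S|)%N.
Proof.
move=> shortQ [SQ S_max] T0Q; rewrite leqNgt; apply/negP => ST0.
case: (@arg_minnP _ T0 (fun T => (T \in Q) && (#|S| < #|T|)%N)
  (fun T => #|S :\: T| + #|T :\: S|)%N); first by rewrite T0Q.
move=> T /andP[TQ ST] T_closest.
have T_closest' A : A \in Q -> (#|S| < #|A|)%N ->
    (#|S :\: T| + #|T :\: S| <= #|S :\: A| + #|A :\: S|)%N.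
  by move=> AQ SA; apply: T_closest; rewrite AQ SA.
have := shortQ _ _ _ (weight_edge_exchange SQ TQ ST T_closest').
have S_notsub : ~~ (S \subset T).
  by apply: contraTN ST => /(S_max T TQ) ->; rewrite ltnn.
move: S_notsub ST; rewrite -setD_eq0 -cards_eq0 -(cardsID T S) -(cardsID S T) setIC.
lia.
Qed.

Lemma maximal_card_eq Q S T :
  short_edges Q -> maximal_in Q S -> maximal_in Q T -> #|S| = #|T|.
Proof.
move=> shortQ Smax Tmax; apply/eqP; rewrite eqn_leq.
by rewrite (short_edges_maximal_card shortQ Tmax Smax.1)
           (short_edges_maximal_card shortQ Smax Tmax.1).
Qed.

Lemma short_edges_setC Q : short_edges Q -> short_edges [set ~: A | A in Q].
Proof.
move=> shortQ c _ _ [/imsetP[X XQ ->] /imsetP[Y YQ ->] cXY c_lt].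
rewrite setDE setCK setIC -setDE.
have cNE A : cweight (fun g => - c g) A = cweight c (~: A) - cweight c setT.
  by rewrite cweight_setC addrAC subrr add0r /cweight sumrN.
apply: (shortQ (fun g => - c g) Y X); split=> //; rewrite !cNE.
  by rewrite cXY.
move=> A AQ AY AX; rewrite cNE ltrD2r -cXY.
by apply: c_lt; rewrite ?imset_f // (inj_eq (@setC_inj E)).
Qed.

Lemma maximal_in_setC Q S : minimal_in Q S -> maximal_in [set ~: A | A in Q] (~: S).
Proof.
move=> [SQ S_min]; split; first exact: imset_f.
by move=> _ /imsetP[T TQ ->]; rewrite setCS => /(S_min T TQ) ->.
Qed.

End SetWeights.

Lemma exists_quadratic_dominates (R : realFieldType) (k1 k0 l : R) :
  0 <= k1 -> 0 <= k0 -> 0 < l -> exists2 t, 1 <= t & k1 * t + k0 < l * t ^+ 2.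
Proof.
move=> k1_ge0 k0_ge0 l_gt0; pose t := 1 + (k1 + k0) / l.
have t_ge1 : 1 <= t.
  by rewrite /t lerDl; apply: divr_ge0; [exact: addr_ge0 | exact: ltW].
have lt : l * t = l + k1 + k0 by rewrite /t mulrDr mulr1 mulrCA divff ?gt_eqF ?mulr1 ?addrA.
by exists t => //; rewrite expr2 mulrA lt; nra.
Qed.

Lemma two_dominant_terms (R : realFieldType) (a b r r1 r2 r3 r4 : R) :
  0 < a -> 0 <= b -> 0 <= r1 <= r -> 0 <= r2 <= r -> 0 <= r3 -> 0 <= r4 ->
  (a + r3) * (a + b + r4) <= (a + r1) * (a + r2) -> a * b <= 2 * a * r + r ^+ 2.
Proof.
move=> a_gt0 b_ge0 /andP[r1_ge0 r1_le] /andP[r2_ge0 r2_le] r3_ge0 r4_ge0 ineq.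
have lower : a * (a + b) <= (a + r3) * (a + b + r4).
  by apply: ler_pM; rewrite ?lerDl ?addr_ge0 // ltW.
have upper : (a + r1) * (a + r2) <= (a + r) * (a + r).
  by apply: ler_pM; rewrite ?lerD2l ?addr_ge0 // ltW.
lra.
Qed.

Section RayleighEdges.
Variables (R : realType) (E : finType).
Implicit Types (w : {set E} -> R) (y : E -> R) (A X Y : {set E}).

Definition Zterm w y A : R := w A * \prod_(g in A) y g.

Lemma ZE w y : Z w y = \sum_(A : {set E}) Zterm w y A.
Proof. by apply: eq_big => [A|A _]; rewrite ?sub0set ?setD0. Qed.

Lemma Zder_set1E w y e :
  y e * Zder w [set e] y = \sum_(A : {set E} | e \in A) Zterm w y A.
Proof.
rewrite /Zder mulr_sumr; apply: eq_big => [A|A]; first by rewrite sub1set.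
by rewrite sub1set => eA; rewrite /Zterm (big_setD1 _ eA) mulrCA.
Qed.

Lemma Zder_set2E w y e f : e != f ->
  y e * y f * Zder w [set e; f] y =
  \sum_(A : {set E} | (e \in A) && (f \in A)) Zterm w y A.
Proof.
move=> ef; rewrite /Zder mulr_sumr; apply: eq_big => [A|A].
  by rewrite subUset !sub1set.
rewrite subUset !sub1set => /andP[eA fA].
have fAe : f \in A :\ e by rewrite !inE eq_sym ef.
by rewrite /Zterm (big_setD1 _ eA) (big_setD1 _ fAe) setDDl /=; ring.
Qed.

Lemma Rayleigh_Zterm w y e f : Rayleigh w -> (forall g, 0 < y g) -> e != f ->
  (\sum_(A : {set E} | (e \in A) && (f \in A)) Zterm w y A) *
    (\sum_(A : {set E}) Zterm w y A) <=
  (\sum_(A : {set E} | e \in A) Zterm w y A) * (\sum_(A : {set E} | f \in A) Zterm w y A).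
Proof.
move=> Ray y_gt0 ef.
rewrite -subr_ge0 -(Zder_set1E w y e) -(Zder_set1E w y f) -Zder_set2E // -ZE.
have := Ray e f ef y y_gt0; have := mulr_gt0 (y_gt0 e) (y_gt0 f).
set ye := y e; set yf := y f; set Ze := Zder _ _ _; set Zf := Zder _ _ _.
set Zef := Zder _ _ _; set Z0 := Z _ _ => yef_gt0 Ray_ef.
have -> : ye * Ze * (yf * Zf) - ye * yf * Zef * Z0 =
    ye * yf * (Ze * Zf - Zef * Z0) by ring.
exact: mulr_ge0 (ltW yef_gt0) Ray_ef.
Qed.

Lemma prod_exprz_cweight (t : R) (c : E -> int) A : 0 < t ->
  \prod_(g in A) t ^ c g = t ^ cweight c A.
Proof.
move=> t_gt0; have t_unit : t \is a GRing.unit by rewrite unitfE gt_eqF.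
rewrite /cweight; elim/big_rec2: _ => [|g x1 x2 _ ->].
  by rewrite expr0z.
by rewrite (exprzDr t_unit).
Qed.

Section TopTerms.
Variables (w : {set E} -> R) (c : E -> int) (X Y : {set E}) (t : R).
Hypotheses (w_ge0 : forall S, 0 <= w S) (cXY : cweight c X = cweight c Y)
  (c_lt : forall A, 0 < w A -> A != X -> A != Y -> cweight c A < cweight c X)
  (t_ge1 : 1 <= t).

Let t_gt0 : 0 < t := lt_le_trans ltr01 t_ge1.
Local Notation y := (fun g => t ^ c g).
Local Notation u := (t ^ (cweight c X - 1)).

Lemma Zterm_exprz A : Zterm w y A = w A * t ^ cweight c A.
Proof. by rewrite /Zterm (prod_exprz_cweight c A t_gt0). Qed.

Lemma Zterm_top : Zterm w y X = w X * t * u /\ Zterm w y Y = w Y * t * u.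
Proof.
have tu : t ^ cweight c X = t * u.
  by rewrite -[X in X * _]expr1z -exprzDr ?unitfE ?gt_eqF // addrC subrK.
by rewrite !Zterm_exprz -cXY tu !mulrA.
Qed.

Lemma Zterm_rest A : A != X -> A != Y -> 0 <= Zterm w y A <= w A * u.
Proof.
move=> AX AY; rewrite Zterm_exprz mulr_ge0 ?exprz_ge0 ?(ltW t_gt0) //=.
have /orP[/eqP <- | wA_gt0] : (0 == w A) || (0 < w A) by rewrite -le_eqVlt.
  by rewrite !mul0r.
by rewrite ler_pM2l // ler_weXz2l // lerBrDr lezD1 c_lt.
Qed.

Lemma sum_Zterm_rest (P : pred {set E}) :
  (forall A, P A -> (A != X) && (A != Y)) ->
  0 <= \sum_(A | P A) Zterm w y A <= (\sum_(A : {set E}) w A) * u.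
Proof.
move=> PXY; rewrite sumr_ge0 /=; last first.
  by move=> A /PXY /andP[AX AY]; case/andP: (Zterm_rest AX AY).
apply: (@le_trans _ _ (\sum_(A | P A) w A * u)).
  by apply: ler_sum => A /PXY /andP[AX AY]; case/andP: (Zterm_rest AX AY).
rewrite -mulr_suml ler_wpM2r ?exprz_ge0 ?(ltW t_gt0) // [X in _ <= X](bigID P) /= lerDl.
exact: sumr_ge0.
Qed.

End TopTerms.

Lemma Rayleigh_weight_edge w (c : E -> int) X Y :
  (forall S, 0 <= w S) -> Rayleigh w -> 0 < w X -> 0 < w Y ->
  cweight c X = cweight c Y ->
  (forall A, 0 < w A -> A != X -> A != Y -> cweight c A < cweight c X) ->
  (#|X :\: Y| <= 1)%N.
Proof.
move=> w_ge0 Ray wX_gt0 wY_gt0 cXY c_lt.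
rewrite leqNgt; apply/negP => /card_gt1P[e [f [eXY fXY ef]]].
move: eXY fXY; rewrite !inE => /andP[eY eX] /andP[fY fX].
have YX : Y != X by apply: contraNneq eY => ->.
pose N := \sum_(A : {set E}) w A.
have N_ge0 : 0 <= N by apply: sumr_ge0.
have [t t_ge1 t_large] :
    exists2 t, 1 <= t & 2 * w X * N * t + N ^+ 2 < w X * w Y * t ^+ 2.
  apply: exists_quadratic_dominates;
    by rewrite ?exprn_ge0 ?mulr_gt0 ?mulr_ge0 ?(ltW wX_gt0).
have t_gt0 : 0 < t := lt_le_trans ltr01 t_ge1.
pose y g := t ^ c g; pose u := t ^ (cweight c X - 1).
have y_gt0 g : 0 < y g by exact: exprz_gt0.
have u_gt0 : 0 < u by exact: exprz_gt0.
(* The terms of X and Y are of order t u, every other term is O(u). *)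
have [ZtermX ZtermY] := Zterm_top w cXY t_ge1.
have rest := sum_Zterm_rest w_ge0 c_lt t_ge1.
have split_X (P : pred {set E}) : P X ->
    \sum_(A | P A) Zterm w y A = w X * t * u + \sum_(A | P A && (A != X)) Zterm w y A.
  by move=> PX; rewrite (bigD1 X) // ZtermX.
have := Rayleigh_Zterm Ray y_gt0 ef.
rewrite (split_X (fun A => e \in A)) // (split_X (fun A => f \in A)) //.
rewrite (split_X (fun A => (e \in A) && (f \in A))) ?eX ?fX //.
rewrite (split_X xpredT) // [\sum_(A | A != X) _](bigD1 Y) //= ZtermY addrA.
have rest_e : 0 <= \sum_(A : {set E} | (e \in A) && (A != X)) Zterm w y A <= N * u.
  by apply: rest => A /andP[eA ->]; apply: contraNneq eY => <-.
have rest_f : 0 <= \sum_(A : {set E} | (f \in A) && (A != X)) Zterm w y A <= N * u.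
  by apply: rest => A /andP[fA ->]; apply: contraNneq fY => <-.
have /andP[rest_ef_ge0 _] :
    0 <= \sum_(A : {set E} | (e \in A) && (f \in A) && (A != X)) Zterm w y A <= N * u.
  by apply: rest => A /andP[/andP[eA _] ->]; apply: contraNneq eY => <-.
have /andP[rest_ge0 _] :
    0 <= \sum_(A : {set E} | (A != X) && (A != Y)) Zterm w y A <= N * u.
  exact: rest.
have wXtu_gt0 : 0 < w X * t * u by rewrite !mulr_gt0.
have wYtu_ge0 : 0 <= w Y * t * u by rewrite ltW // !mulr_gt0.
move=> /(two_dominant_terms wXtu_gt0 wYtu_ge0 rest_e rest_f rest_ef_ge0 rest_ge0).
rewrite -subr_ge0; apply/negP; rewrite -ltNge subr_lt0.
have -> : w X * t * u * (w Y * t * u) = w X * w Y * t ^+ 2 * u ^+ 2 by ring.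
have -> : 2 * (w X * t * u) * (N * u) + (N * u) ^+ 2 =
    (2 * w X * N * t + N ^+ 2) * u ^+ 2 by ring.
by rewrite ltr_pM2r ?exprn_gt0.
Qed.

Lemma weakly_Rayleigh_short_edges (Q : {set {set E}}) :
  weakly_Rayleigh R Q -> short_edges Q.
Proof.
move=> [w [w_ge0 [supp [_ Ray]]]] c X Y [XQ YQ cXY c_lt].
apply: (Rayleigh_weight_edge w_ge0 Ray ((supp X).2 XQ) ((supp Y).2 YQ) cXY).
by move=> A /supp; apply: c_lt.
Qed.

End RayleighEdges.

Lemma exists_common_value (T : Type) (P : T -> Prop) (f : T -> nat) :
  (forall S1 S2, P S1 -> P S2 -> f S1 = f S2) -> exists r, forall S, P S -> f S = r.
Proof.
move=> f_const; have [[S0 PS0] | noP] := classic (exists S, P S).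
  by exists (f S0) => S PS; apply: f_const.
by exists 0%N => S PS; case: noP; exists S.
Qed.

Theorem corollary4p8 (R : realType) (E : finType) (Q : {set {set E}}) :
  weakly_Rayleigh R Q ->
  (exists r : nat, forall S, maximal_in Q S -> #|S| = r) /\
  (exists s : nat, forall S, minimal_in Q S -> #|S| = s).
Proof.
move=> /weakly_Rayleigh_short_edges shortQ; split; apply: exists_common_value.
  by move=> S T; apply: maximal_card_eq.
move=> S T /maximal_in_setC Smax /maximal_in_setC Tmax.
have := maximal_card_eq (short_edges_setC shortQ) Smax Tmax.
by move: (cardsC S) (cardsC T); lia.
Qed.
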